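(* Let $(\Omega,\Pi)$ be a set with a possibility measure, let $d\ge1$, and let $X_n$ ($n\ge1$) and $X$ be fuzzy variables on $\Omega$ with values in $\mathbb R^d$. (a) If $X_n\to X$ in measure, then $X_n\to X$ almost surely; if $X_n\to X$ almost surely, then $X_n\to X$ weakly almost surely; if $X_n\to X$ weakly almost surely, then $X_n\to X$ weakly in measure. (b) Suppose each $X_n$ is a compact fuzzy variable and $X\equiv c$ is constant for some $c\in\mathbb R^d$ (so its membership function is the indicator $\mathbf 1_{\{c\}}$). Then $X_n\to X$ in distribution if and only if $X_n\to X$ in measure.
   Context: A fuzzy set in $\Omega$ is a function $\pi:\Omega\to[0,1]$ with $\pi(\omega_0)=1$ for some $\omega_0$; its $\alpha$-cut ($\alpha\in(0,1]$) is $\{\pi\ge\alpha\}$. The possibility measure defined by $\pi$ is $\Pi(B)=\sup_{\omega\in B}\pi(\omega)$ for all $B\subseteq\Omega$ (with $\sup\emptyset=0$). A fuzzy variable with values in $E$ is any map $X:\Omega\to E$; its membership function is the fuzzy set $A_X(y)=\Pi(X^{-1}(y))=\sup\pi(X^{-1}(y))$. $X$ is a compact fuzzy variable if all $\alpha$-cuts of $A_X$, $\alpha\in(0,1]$, are nonempty and compact. $|\cdot|$ is the Euclidean norm. Types of convergence: - almost sure: $\Pi(\{\omega: X_n(\omega)\not\to X(\omega)\})=0$ (the set includes those $\omega$ where the limit does not exist); - weakly almost sure: $\Pi(\{\omega: \lim_n X_n(\omega)=X(\omega)\})=1$; - in measure: for every $\epsilon>0$, $\lim_n\Pi(|X_n-X|\ge\epsilon)=0$;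 - weakly in measure: for every $\epsilon>0$, $\lim_n\Pi(|X_n-X|\le\epsilon)=1$; - in distribution (for compact fuzzy variables): for every $\alpha\in(0,1]$, the $\alpha$-cuts $A_{X_n}^\alpha$ converge to $A_X^\alpha$ in the Hausdorff metric on nonempty compact subsets of $\mathbb R^d$. *)

From Stdlib Require Vectors.Fin.
From Stdlib Require Import Reals Lra List.
Open Scope R_scope.

Record poss_space (Omega : Type) := {
  pi : Omega -> R;
  pi_range : forall w, 0 <= pi w <= 1;
  pi_norm : exists w0, pi w0 = 1
}.
Arguments pi {Omega} _ _.
Arguments pi_range {Omega} _ _.

(** The set of values {0} ∪ {pi w | w ∈ B}; its sup is Π(B) (sup ∅ = 0). *)
Definition Pi_vals {Omega} (P : poss_space Omega) (B : Omega -> Prop) (x : R) : Prop :=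
  x = 0 \/ exists w, B w /\ x = pi P w.

Lemma Pi_vals_bound {Omega} (P : poss_space Omega) B : bound (Pi_vals P B).
Proof.
  exists 1. intros x [->|[w [_ ->]]]; [lra| apply (pi_range P w)].
Qed.

Lemma Pi_vals_ne {Omega} (P : poss_space Omega) B : exists x, Pi_vals P B x.
Proof. exists 0. now left. Qed.

Definition Pi {Omega} (P : poss_space Omega) (B : Omega -> Prop) : R :=
  proj1_sig (completeness (Pi_vals P B) (Pi_vals_bound P B) (Pi_vals_ne P B)).

Definition Vec (d : nat) := Fin.t d -> R.

Fixpoint sum_fin (d : nat) : (Fin.t d -> R) -> R :=
  match d with
  | O => fun _ => 0
  | S n => fun f => f Fin.F1 + sum_fin n (fun i => f (Fin.FS i))
  end.

Definition norm {d} (x : Vec d) : R := sqrt (sum_fin d (fun i => (x i) ^ 2)).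
Definition dist {d} (x y : Vec d) : R := norm (fun i => x i - y i).

Definition vconv {d} (u : nat -> Vec d) (l : Vec d) : Prop :=
  forall eps, eps > 0 -> exists N, forall n, (n >= N)%nat -> dist (u n) l < eps.

Definition memb {Omega d} (P : poss_space Omega) (X : Omega -> Vec d) (y : Vec d) : R :=
  Pi P (fun w => X w = y).

Definition alpha_cut {d} (A : Vec d -> R) (alpha : R) (y : Vec d) : Prop := alpha <= A y.

Definition open_set {d} (U : Vec d -> Prop) : Prop :=
  forall x, U x -> exists r, r > 0 /\ forall y, dist x y < r -> U y.

Definition compact_set {d} (K : Vec d -> Prop) : Prop :=
  forall (I : Type) (U : I -> Vec d -> Prop),
    (forall i, open_set (U i)) ->
    (forall x, K x -> exists i, U i x) ->
    exists l : list I, forall x, K x -> exists i, In i l /\ U i x.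

Definition compact_fuzzy {Omega d} (P : poss_space Omega) (X : Omega -> Vec d) : Prop :=
  forall alpha, 0 < alpha <= 1 ->
    (exists y, alpha_cut (memb P X) alpha y) /\ compact_set (alpha_cut (memb P X) alpha).

(** Hausdorff distance bound: H(A,B) <= e for compact sets A, B. *)
Definition hausdorff_le {d} (A B : Vec d -> Prop) (e : R) : Prop :=
  (forall a, A a -> exists b, B b /\ dist a b <= e) /\
  (forall b, B b -> exists a, A a /\ dist a b <= e).

Definition hausdorff_conv {d} (A : nat -> Vec d -> Prop) (L : Vec d -> Prop) : Prop :=
  forall e, e > 0 -> exists N, forall n, (n >= N)%nat -> hausdorff_le (A n) L e.

Definition conv_as {Omega d} (P : poss_space Omega) (Xs : nat -> Omega -> Vec d) (X : Omega -> Vec d) :=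
  Pi P (fun w => ~ vconv (fun n => Xs n w) (X w)) = 0.

Definition conv_was {Omega d} (P : poss_space Omega) (Xs : nat -> Omega -> Vec d) (X : Omega -> Vec d) :=
  Pi P (fun w => vconv (fun n => Xs n w) (X w)) = 1.

Definition conv_meas {Omega d} (P : poss_space Omega) (Xs : nat -> Omega -> Vec d) (X : Omega -> Vec d) :=
  forall eps, eps > 0 -> Un_cv (fun n => Pi P (fun w => dist (Xs n w) (X w) >= eps)) 0.

Definition conv_wmeas {Omega d} (P : poss_space Omega) (Xs : nat -> Omega -> Vec d) (X : Omega -> Vec d) :=
  forall eps, eps > 0 -> Un_cv (fun n => Pi P (fun w => dist (Xs n w) (X w) <= eps)) 1.

Definition conv_distr {Omega d} (P : poss_space Omega) (Xs : nat -> Omega -> Vec d) (X : Omega -> Vec d) :=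
  forall alpha, 0 < alpha <= 1 ->
    hausdorff_conv (fun n => alpha_cut (memb P (Xs n)) alpha) (alpha_cut (memb P X) alpha).

(** A possibility measure Π(B) = sup_{w ∈ B} π(w) is a supremum,
    so every statement about Π reduces to pointwise statements about π:
    Π(B) = 0 means π vanishes on B, Π(B) = 1 holds as soon as B contains a
    point of full possibility, and Π(B) > a yields a point of B with π > a.

    (a) If X_n → X in measure and X_n(w) does not converge, some ε-gap
        recurs infinitely often, so π(w) ≤ Π(|X_n - X| ≥ ε) for infinitely
        many n, forcing π(w) = 0.  Almost sure convergence puts a point of
        possibility 1 in the convergence set.  Weak a.s. convergence yields
        points w of convergence with π(w) arbitrarily close to 1, and each
        such w eventually lies in {|X_n - X| ≤ ε}.
    (b) For the constant X ≡ c every α-cut of A_X is {c}, so Hausdorff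
        convergence of the (nonempty) α-cuts of A_{X_n} to it means that the
        α-cuts of A_{X_n} eventually lie in a small ball around c.  This is
        exactly Π(|X_n - c| ≥ ε) < α, by the two comparison lemmas
        [cut_near_of_Pi_small] and [Pi_small_of_cut_near]. *)

From Pilot Require Import Defs.
From Stdlib Require Import Reals Lra Classical.
Open Scope R_scope.

Section PossibilityMeasure.

Variable Omega : Type.
Variable P : poss_space Omega.

Lemma Pi_is_lub (B : Omega -> Prop) : is_lub (Pi_vals P B) (Pi P B).
Proof. unfold Pi. destruct completeness as [x Hx]. exact Hx. Qed.

Lemma Pi_ge_pi (B : Omega -> Prop) w : B w -> pi P w <= Pi P B.
Proof. intros Bw. apply (proj1 (Pi_is_lub B)). right. eauto. Qed.

Lemma Pi_nonneg (B : Omega -> Prop) : 0 <= Pi P B.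
Proof. apply (proj1 (Pi_is_lub B)). now left. Qed.

Lemma Pi_least (B : Omega -> Prop) a :
  0 <= a -> (forall w, B w -> pi P w <= a) -> Pi P B <= a.
Proof.
  intros Ha Hb. apply (proj2 (Pi_is_lub B)).
  intros x [->|[w [Bw ->]]]; auto.
Qed.

Lemma Pi_le_1 (B : Omega -> Prop) : Pi P B <= 1.
Proof. apply Pi_least; [lra|]. intros w _. apply (pi_range P w). Qed.

Lemma Pi_monotone (B C : Omega -> Prop) :
  (forall w, B w -> C w) -> Pi P B <= Pi P C.
Proof.
  intros HBC. apply Pi_least; [apply Pi_nonneg|].
  intros w Bw. apply Pi_ge_pi; auto.
Qed.

Lemma Pi_approx (B : Omega -> Prop) a :
  0 <= a -> a < Pi P B -> exists w, B w /\ a < pi P w.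
Proof.
  intros Ha Hlt. apply NNPP. intros Hnone.
  assert (Pi P B <= a).
  { apply Pi_least; auto. intros w Bw. apply Rnot_lt_le.
    intros Hw. apply Hnone. eauto. }
  lra.
Qed.

Lemma Pi_eq_1_of_mode (B : Omega -> Prop) w0 :
  pi P w0 = 1 -> B w0 -> Pi P B = 1.
Proof.
  intros Hw0 Bw0. apply Rle_antisym; [apply Pi_le_1|].
  rewrite <- Hw0. now apply Pi_ge_pi.
Qed.

End PossibilityMeasure.

Arguments Pi_ge_pi {Omega} P B w.
Arguments Pi_nonneg {Omega} P B.
Arguments Pi_le_1 {Omega} P B.

Lemma Un_cv_0_nonneg (u : nat -> R) :
  (forall n, 0 <= u n) ->
  (Un_cv u 0 <-> forall e, e > 0 -> exists N, forall n, (n >= N)%nat -> u n < e).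
Proof.
  intros Hu. unfold Un_cv, R_dist.
  split; intros H e He; destruct (H e He) as [N HN]; exists N; intros n Hn;
    specialize (HN n Hn); rewrite Rminus_0_r, Rabs_right in * by (apply Rle_ge, Hu);
    exact HN.
Qed.

Lemma Un_cv_1_le_1 (u : nat -> R) :
  (forall n, u n <= 1) ->
  (forall e, e > 0 -> exists N, forall n, (n >= N)%nat -> 1 - e < u n) ->
  Un_cv u 1.
Proof.
  intros Hu H e He. destruct (H e He) as [N HN]. exists N. intros n Hn.
  specialize (HN n Hn). specialize (Hu n). unfold R_dist. apply Rabs_def1; lra.
Qed.

Lemma not_vconv_gap {d} (u : nat -> Vec d) (l : Vec d) :
  ~ vconv u l ->
  exists eps, eps > 0 /\ forall N, exists n, (n >= N)%nat /\ Defs.dist (u n) l >= eps.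
Proof.
  intros Hdiv. apply NNPP. intros Hnogap. apply Hdiv. intros eps Heps.
  apply NNPP. intros Hnot. apply Hnogap. exists eps. split; [exact Heps|].
  intros N. apply NNPP. intros HN. apply Hnot. exists N. intros n Hn.
  apply Rnot_le_lt. intros Hle. apply HN. exists n. split; [exact Hn | lra].
Qed.

Section GeneralModes.

Variables (Omega : Type) (P : poss_space Omega) (d : nat).
Variables (Xs : nat -> Omega -> Vec d) (X : Omega -> Vec d).

Lemma conv_meas_eventually :
  conv_meas P Xs X <->
  forall eps e, eps > 0 -> e > 0 -> exists N, forall n, (n >= N)%nat ->
    Pi P (fun w => Defs.dist (Xs n w) (X w) >= eps) < e.
Proof.
  split.
  - intros Hm eps e Heps He.
    exact (proj1 (Un_cv_0_nonneg _ (fun n => Pi_nonneg P _)) (Hm eps Heps) e He).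
  - intros Hm eps Heps.
    apply (Un_cv_0_nonneg _ (fun n => Pi_nonneg P _)). intros e He. now apply Hm.
Qed.

Lemma meas_implies_as : conv_meas P Xs X -> conv_as P Xs X.
Proof.
  intros Hm. unfold conv_as. apply Rle_antisym; [|apply Pi_nonneg].
  apply Pi_least; [lra|]. intros w Hdiv. apply Rnot_lt_le. intros Hpos.
  destruct (not_vconv_gap _ _ Hdiv) as [eps [Heps Hgap]].
  destruct (proj1 conv_meas_eventually Hm eps (pi P w) Heps Hpos) as [N HN].
  destruct (Hgap N) as [n [Hn Hfar]].
  pose proof (Pi_ge_pi P (fun w0 => Defs.dist (Xs n w0) (X w0) >= eps) w Hfar).
  specialize (HN n Hn). lra.
Qed.

Lemma as_implies_was : conv_as P Xs X -> conv_was P Xs X.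
Proof.
  intros Has. destruct (pi_norm _ P) as [w0 Hw0].
  apply (Pi_eq_1_of_mode _ P _ w0 Hw0). apply NNPP. intros Hdiv.
  pose proof (Pi_ge_pi P (fun w => ~ vconv (fun n => Xs n w) (X w)) w0 Hdiv).
  unfold conv_as in Has. lra.
Qed.

Lemma was_implies_wmeas : conv_was P Xs X -> conv_wmeas P Xs X.
Proof.
  intros Hw eps Heps. apply Un_cv_1_le_1; [intros n; apply Pi_le_1|].
  intros e He.
  assert (Hlow : Rmax 0 (1 - e) < Pi P (fun w => vconv (fun n => Xs n w) (X w))).
  { unfold conv_was in Hw. rewrite Hw. apply Rmax_lub_lt; lra. }
  destruct (Pi_approx _ P _ _ (Rmax_l 0 (1 - e)) Hlow) as [w [Hconv Hpw]].
  destruct (Hconv eps Heps) as [N HN]. exists N. intros n Hn.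
  assert (Hclose : Defs.dist (Xs n w) (X w) <= eps) by (left; apply HN; exact Hn).
  pose proof (Pi_ge_pi P (fun w0 => Defs.dist (Xs n w0) (X w0) <= eps) w Hclose).
  pose proof (Rmax_r 0 (1 - e)). lra.
Qed.

End GeneralModes.

Section ConstantLimit.

Variables (Omega : Type) (P : poss_space Omega) (d : nat).

Lemma alpha_cut_const (c y : Vec d) alpha :
  0 < alpha <= 1 -> alpha_cut (memb P (fun _ : Omega => c)) alpha y <-> y = c.
Proof.
  intros Ha. unfold alpha_cut, memb. split.
  - intros Hcut. apply NNPP. intros Hne.
    assert (Pi P (fun _ : Omega => c = y) <= 0).
    { apply Pi_least; [lra|]. intros w Hw. exfalso. auto. }
    lra.
  - intros ->. destruct (pi_norm _ P) as [w0 Hw0].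
    rewrite (Pi_eq_1_of_mode _ P (fun _ : Omega => c = c) w0 Hw0 eq_refl). lra.
Qed.

Lemma hausdorff_le_singleton (A L : Vec d -> Prop) (c : Vec d) e :
  (forall y, L y <-> y = c) -> (exists a, A a) ->
  (hausdorff_le A L e <-> forall a, A a -> Defs.dist a c <= e).
Proof.
  intros HL [a0 Ha0]. split.
  - intros [Hnear _] a Ha. destruct (Hnear a Ha) as [b [Lb Hab]].
    apply HL in Lb. now subst b.
  - intros Hnear. split.
    + intros a Ha. exists c. split; [now apply HL | now apply Hnear].
    + intros b Lb. apply HL in Lb. subst b. exists a0. split; auto.
Qed.

Variable Y : Omega -> Vec d.

Lemma cut_near_of_Pi_small (c : Vec d) eps alpha :
  Pi P (fun w => Defs.dist (Y w) c >= eps) < alpha ->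
  forall a, alpha_cut (memb P Y) alpha a -> Defs.dist a c < eps.
Proof.
  intros Hsmall a Hcut. apply Rnot_le_lt. intros Hfar.
  assert (Pi P (fun w => Y w = a) <= Pi P (fun w => Defs.dist (Y w) c >= eps)).
  { apply Pi_monotone. intros w ->. lra. }
  unfold alpha_cut, memb in Hcut. lra.
Qed.

Lemma Pi_small_of_cut_near (c : Vec d) eps alpha :
  0 <= alpha ->
  (forall a, alpha_cut (memb P Y) alpha a -> Defs.dist a c < eps) ->
  Pi P (fun w => Defs.dist (Y w) c >= eps) <= alpha.
Proof.
  intros Ha Hnear. apply Pi_least; [exact Ha|]. intros w Hfar.
  apply Rnot_lt_le. intros Hw.
  assert (Hcut : alpha_cut (memb P Y) alpha (Y w)).
  { unfold alpha_cut, memb.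
    pose proof (Pi_ge_pi P (fun w0 => Y w0 = Y w) w eq_refl). lra. }
  specialize (Hnear _ Hcut). lra.
Qed.

End ConstantLimit.

Section DistributionToConstant.

Variables (Omega : Type) (P : poss_space Omega) (d : nat).
Variables (Xs : nat -> Omega -> Vec d) (c : Vec d).

Lemma distr_implies_meas_const :
  conv_distr P Xs (fun _ => c) -> conv_meas P Xs (fun _ => c).
Proof.
  intros Hdist. apply conv_meas_eventually. intros eps e Heps He.
  set (alpha := Rmin (e / 2) 1).
  assert (Ha : 0 < alpha <= 1).
  { split; [apply Rmin_glb_lt; lra | apply Rmin_r]. }
  assert (Hae : alpha < e) by (pose proof (Rmin_l (e / 2) 1); unfold alpha; lra).
  destruct (Hdist alpha Ha (eps / 2) ltac:(lra)) as [N HN].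
  exists N. intros n Hn. destruct (HN n Hn) as [Hnear _].
  enough (Pi P (fun w => Defs.dist (Xs n w) c >= eps) <= alpha) by lra.
  apply Pi_small_of_cut_near; [lra|]. intros a Ha_cut.
  destruct (Hnear a Ha_cut) as [b [Hb Hab]].
  apply (alpha_cut_const _ P) in Hb; [subst b; lra | exact Ha].
Qed.

(** This direction uses that the α-cuts of each A_{X_n} are nonempty. *)
Lemma meas_implies_distr_const :
  (forall n, compact_fuzzy P (Xs n)) ->
  conv_meas P Xs (fun _ => c) -> conv_distr P Xs (fun _ => c).
Proof.
  intros Hcomp Hm alpha Ha e He.
  destruct (proj1 (conv_meas_eventually _ P _ Xs _) Hm e alpha He (proj1 Ha)) as [N HN].
  exists N. intros n Hn.
  apply (hausdorff_le_singleton d _ _ c).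
  - intros y. now apply alpha_cut_const.
  - exact (proj1 (Hcomp n alpha Ha)).
  - intros a Ha_cut. left. exact (cut_near_of_Pi_small _ P _ _ c e alpha (HN n Hn) a Ha_cut).
Qed.

End DistributionToConstant.

Theorem mainTheorem2 (Omega : Type) (P : poss_space Omega) (d : nat) (Hd : (1 <= d)%nat)
  (Xs : nat -> Omega -> Vec d) (X : Omega -> Vec d) :
  ((conv_meas P Xs X -> conv_as P Xs X) /\
   (conv_as P Xs X -> conv_was P Xs X) /\
   (conv_was P Xs X -> conv_wmeas P Xs X)) /\
  ((forall n, compact_fuzzy P (Xs n)) ->
   forall c : Vec d, X = (fun _ => c) ->
   (conv_distr P Xs X <-> conv_meas P Xs X)).
Proof.
  split.
  - split; [|split].
    + apply meas_implies_as.
    + apply as_implies_was.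
    + apply was_implies_wmeas.
  - intros Hcomp c ->. split.
    + apply distr_implies_meas_const.
    + now apply meas_implies_distr_const.
Qed.
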